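(* Let $n$ be even. The signed cardinality statistic $SC$ is $0$-mesic under rowmotion on $\mathcal{IC}([n])$: its average over every rowmotion orbit equals $0$.
   Context: $[n]$ denotes the chain poset $1<2<\cdots<n$, ranked with $\mathrm{rk}(i)=i-1$. A subset $I\subseteq P$ of a finite poset is interval-closed if for all $x,y\in I$ and $z\in P$ with $x\le z\le y$ we have $z\in I$; $\mathcal{IC}(P)$ is the set of interval-closed subsets. For $x\in P$ the toggle $t_x$ sends $I$ to $I\triangle\{x\}$ if that is interval-closed and to $I$ otherwise. Rowmotion is $\mathrm{Row}=t_{x_1}\circ\cdots\circ t_{x_N}$, where $(x_1,\dots,x_N)$ is a linear extension of $P$ (toggling from the top down). For a ranked poset with minimum rank $0$, $SC(x)=1$ if $\mathrm{rk}(x)$ is even and $-1$ if odd, and $SC(I)=\sum_{x\in I}SC(x)$. A statistic is $c$-mesic if its average over every rowmotion orbit is $c$. *)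

From mathcomp Require Import all_boot all_order all_algebra.
Set Implicit Arguments. Unset Strict Implicit. Unset Printing Implicit Defensive.
Import GRing.Theory Num.Theory.

(* The chain [n] = 1 < 2 < ... < n is modelled by 'I_n: the ordinal i : 'I_n
   stands for the element i+1 of [n]; its order is the order of nat and its
   rank is rk(i+1) = i = val i. *)

Definition interval_closed (n : nat) (I : {set 'I_n}) : bool :=
  [forall x in I, forall y in I, forall z : 'I_n,
     ((x <= z)%N && (z <= y)%N) ==> (z \in I)].

Definition toggle (n : nat) (x : 'I_n) (I : {set 'I_n}) : {set 'I_n} :=
  let J := if x \in I then I :\ x else x |: I in
  if interval_closed J then J else I.

(* Rowmotion Row = t_{x_1} o ... o t_{x_N} for the (unique) linear extension
   (x_1,...,x_N) = (0,1,...,n-1) of the chain: toggles from the top down,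
   i.e. t_{n-1} is applied first and t_0 last. *)
Definition rowmotion (n : nat) (I : {set 'I_n}) : {set 'I_n} :=
  foldr (fun x J => toggle x J) I (enum 'I_n).

Definition SC_elt (n : nat) (x : 'I_n) : int := if odd x then (-1)%R else 1%R.
Definition SC (n : nat) (I : {set 'I_n}) : int := (\sum_(x in I) SC_elt x)%R.

Definition orbit_average (n : nat) (f : {set 'I_n} -> int) (I : {set 'I_n}) : rat :=
  ((\sum_(J <- orbit (@rowmotion n) I) (f J)%:~R) / (size (orbit (@rowmotion n) I))%:R)%R.

Definition mesic (n : nat) (f : {set 'I_n} -> int) (c : rat) : Prop :=
  forall I : {set 'I_n}, interval_closed I -> orbit_average f I = c.

From mathcomp Require Import all_boot all_order all_algebra.
From mathcomp Require Import zify.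
Import GRing.Theory Num.Theory.

Set Implicit Arguments.
Unset Strict Implicit.
Unset Printing Implicit Defensive.

(* For even n, rowmotion negates the signed cardinality of every
   interval-closed subset of the chain [n]; summing over an orbit, which is a
   cycle and hence invariant under one application of rowmotion, the orbit sum
   of SC equals its own opposite and so vanishes. *)

Section ChainIntervals.
Variable n : nat.

Definition itv (a b : nat) : {set 'I_n} := [set x : 'I_n | a <= x < b].

Lemma interval_closedP (I : {set 'I_n}) (x y z : 'I_n) :
  interval_closed I -> x \in I -> y \in I -> x <= z <= y -> z \in I.
Proof.
move=> /forall_inP /(_ x) hI hx hy xzy.
by move: (hI hx) => /forall_inP /(_ y hy) /forallP /(_ z) /implyP; apply.
Qed.

Lemma itv_interval_closed (a b : nat) : interval_closed (itv a b).
Proof.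
apply/forall_inP => x; rewrite inE => /andP[ax _].
apply/forall_inP => y; rewrite inE => /andP[_ yb].
apply/forallP => z; apply/implyP => /andP[xz zy].
by rewrite inE (leq_trans ax xz) (leq_ltn_trans zy yb).
Qed.

(* An interval-closed subset of a chain is empty or an interval [a, b):
   take a its minimum and b - 1 its maximum. *)
Lemma interval_closed_cases (I : {set 'I_n}) : interval_closed I ->
  I = set0 \/ exists a b, a < b <= n /\ I = itv a b.
Proof.
move=> hI; case: (set_0Vmem I) => [->|[x0 hx0]]; [by left | right].
case: (arg_minnP (fun x : 'I_n => val x) hx0) => lo hlo minlo.
case: (arg_maxnP (fun x : 'I_n => val x) hx0) => hi hhi maxhi.
exists lo, hi.+1; split; first by move: (minlo hi hhi) (ltn_ord hi) => /=; lia.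
apply/setP => z; rewrite inE; apply/idP/idP.
  by move=> hz; move: (minlo z hz) (maxhi z hz) => /=; lia.
by move=> hz; apply: (interval_closedP hI hlo hhi); lia.
Qed.

Lemma toggle_interval_closed (x : 'I_n) (I : {set 'I_n}) :
  interval_closed I -> interval_closed (toggle x I).
Proof. by rewrite /toggle; case: ifP. Qed.

Lemma toggleK (x : 'I_n) (I : {set 'I_n}) :
  interval_closed I -> toggle x (toggle x I) = I.
Proof.
move=> hI; rewrite {2}/toggle; case: ifP => hJ; last by rewrite /toggle hJ.
rewrite /toggle; case hx: (x \in I).
  by rewrite in_setD1 eqxx /= setD1K // hI.
by rewrite in_setU1 eqxx /= setU1K ?hx // hI.
Qed.

Lemma toggles_interval_closed (s : seq 'I_n) (I : {set 'I_n}) :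
  interval_closed I -> interval_closed (foldr (@toggle n) I s).
Proof. by move=> hI; elim: s => //= x s IH; apply: toggle_interval_closed. Qed.

Lemma toggles_inj (s : seq 'I_n) (I1 I2 : {set 'I_n}) :
  interval_closed I1 -> interval_closed I2 ->
  foldr (@toggle n) I1 s = foldr (@toggle n) I2 s -> I1 = I2.
Proof.
move=> h1 h2; elim: s => //= x s IH E; apply: IH.
by rewrite -(toggleK x (toggles_interval_closed s h1)) E
           toggleK // toggles_interval_closed.
Qed.

Lemma rowmotion_interval_closed (I : {set 'I_n}) :
  interval_closed I -> interval_closed (rowmotion I).
Proof. exact: toggles_interval_closed. Qed.

Lemma rowmotion_inj (I1 I2 : {set 'I_n}) :
  interval_closed I1 -> interval_closed I2 -> rowmotion I1 = rowmotion I2 -> I1 = I2.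
Proof. exact: toggles_inj. Qed.

Lemma toggle_to (x : 'I_n) (I J : {set 'I_n}) :
  (if x \in I then I :\ x else x |: I) = J -> interval_closed J -> toggle x I = J.
Proof. by rewrite /toggle => -> ->. Qed.

Lemma toggle_stuck (x : 'I_n) (I : {set 'I_n}) :
  ~~ interval_closed (if x \in I then I :\ x else x |: I) -> toggle x I = I.
Proof. by rewrite /toggle => /negbTE ->. Qed.

Lemma toggle_shrink_right (x : 'I_n) (a : nat) :
  a <= x -> toggle x (itv a x.+1) = itv a x.
Proof.
move=> ax; apply: toggle_to (itv_interval_closed _ _).
rewrite inE ax ltnSn; apply/setP => z; rewrite !inE -val_eqE /=; lia.
Qed.

Lemma toggle_shrink_left (x : 'I_n) (b : nat) :
  x < b -> toggle x (itv x b) = itv x.+1 b.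
Proof.
move=> xb; apply: toggle_to (itv_interval_closed _ _).
rewrite inE leqnn xb; apply/setP => z; rewrite !inE -val_eqE /=; lia.
Qed.

Lemma toggle_grow_left (x : 'I_n) (b : nat) :
  x < b -> toggle x (itv x.+1 b) = itv x b.
Proof.
move=> xb; apply: toggle_to (itv_interval_closed _ _).
rewrite inE ltnn; apply/setP => z; rewrite !inE -val_eqE /=; lia.
Qed.

Lemma toggle_grow_right (x : 'I_n) (a : nat) :
  a <= x -> toggle x (itv a x) = itv a x.+1.
Proof.
move=> ax; apply: toggle_to (itv_interval_closed _ _).
rewrite inE ltnn andbF; apply/setP => z; rewrite !inE -val_eqE /=; lia.
Qed.

(* Removing an interior point would disconnect the interval. *)
Lemma toggle_interior (x : 'I_n) (a b : nat) :
  a < x -> x.+1 < b -> b <= n -> toggle x (itv a b) = itv a b.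
Proof.
move=> ax xb bn; apply: toggle_stuck; rewrite inE (ltnW ax) (ltnW xb).
apply/negP => hic.
have ha : a < n by lia.
have hs : x.+1 < n by lia.
have : x \in itv a b :\ x.
  by apply: (interval_closedP (x := Ordinal ha) (y := Ordinal hs) hic);
     rewrite ?inE -?val_eqE /=; lia.
by rewrite !inE eqxx.
Qed.

(* Adding a point not adjacent to the interval would leave a gap. *)
Lemma toggle_far (x : 'I_n) (a b : nat) :
  a < b -> b <= n -> x.+1 < a \/ b < x -> toggle x (itv a b) = itv a b.
Proof.
move=> ab bn hx; apply: toggle_stuck.
have -> : (x \in itv a b) = false by rewrite inE; lia.
apply/negP => hic; have ha : a < n by lia.
case: hx => hx.
  have hs : x.+1 < n by lia.
  have : Ordinal hs \in x |: itv a b.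
    by apply: (interval_closedP (x := x) (y := Ordinal ha) hic);
       rewrite ?inE -?val_eqE /=; lia.
  by rewrite !inE -val_eqE /=; lia.
have hs : b < n by have := ltn_ord x; lia.
have : Ordinal hs \in x |: itv a b.
  by apply: (interval_closedP (x := Ordinal ha) (y := x) hic);
     rewrite ?inE -?val_eqE /=; lia.
by rewrite !inE -val_eqE /=; lia.
Qed.

Definition toggle_nat (k : nat) (I : {set 'I_n}) : {set 'I_n} :=
  oapp (fun y : 'I_n => toggle y I) I (insub k).

Definition toggles_from (I : {set 'I_n}) (k : nat) : {set 'I_n} :=
  foldr toggle_nat I (iota k (n - k)).

Lemma toggles_from_n (I : {set 'I_n}) : toggles_from I n = I.
Proof. by rewrite /toggles_from subnn. Qed.

Lemma toggles_fromS (I : {set 'I_n}) (k : nat) (hk : k < n) :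
  toggles_from I k = toggle (Ordinal hk) (toggles_from I k.+1).
Proof.
by rewrite /toggles_from -(subnSK hk) /= /toggle_nat insubT.
Qed.

Lemma rowmotion_toggles_from (I : {set 'I_n}) : rowmotion I = toggles_from I 0.
Proof.
rewrite /toggles_from subn0 -val_enum_ord foldr_map /rowmotion.
by elim: (enum 'I_n) => //= x s ->; rewrite /toggle_nat valK.
Qed.

Lemma downward_ind (Q : nat -> Prop) (lo hi : nat) : Q hi ->
  (forall k, lo <= k -> k < hi -> Q k.+1 -> Q k) ->
  forall k, lo <= k <= hi -> Q k.
Proof.
move=> Qhi step.
have H d : d <= hi - lo -> Q (hi - d).
  elim: d => [|d IH] hd; first by rewrite subn0.
  by apply: step; [lia | lia | rewrite subnSK; [apply: IH|]; lia].
move=> k hk; have -> : k = hi - (hi - k) by lia.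
by apply: H; lia.
Qed.

(* Rowmotion on a non-final interval: only the toggles at b and at a act,
   first growing the interval to [a, b+1), then shrinking it to [a+1, b+1). *)
Lemma rowmotion_itv_shift (a b : nat) :
  a < b -> b < n -> rowmotion (itv a b) = itv a.+1 b.+1.
Proof.
move=> ab bn; set I := itv a b.
have above k : b.+1 <= k <= n -> toggles_from I k = I.
  move: k; apply: downward_ind; first exact: toggles_from_n.
  by move=> k h1 h2 IH; rewrite (toggles_fromS _ h2) IH toggle_far //=; lia.
have middle k : a.+1 <= k <= b -> toggles_from I k = itv a b.+1.
  move: k; apply: downward_ind.
    by rewrite (toggles_fromS _ bn) above ?toggle_grow_right //=; lia.
  move=> k h1 h2 IH; have hk : k < n by lia.
  by rewrite (toggles_fromS _ hk) IH toggle_interior //=; lia.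
have below k : 0 <= k <= a -> toggles_from I k = itv a.+1 b.+1.
  move: k; apply: downward_ind => [|k _ h2 IH].
    have ha : a < n by lia.
    by rewrite (toggles_fromS _ ha) middle ?toggle_shrink_left //=; lia.
  have hk : k < n by lia.
  by rewrite (toggles_fromS _ hk) IH toggle_far //=; lia.
by rewrite rowmotion_toggles_from below.
Qed.

(* Rowmotion on a final interval [a, n): toggling down to a shrinks it to
   the empty interval [a, a), then the toggles below a grow it to [0, a). *)
Lemma rowmotion_itv_top (a : nat) : a < n -> rowmotion (itv a n) = itv 0 a.
Proof.
move=> an; set I := itv a n.
have above k : a <= k <= n -> toggles_from I k = itv a k.
  move: k; apply: downward_ind; first exact: toggles_from_n.
  by move=> k h1 h2 IH; rewrite (toggles_fromS _ h2) IH toggle_shrink_right.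
have below k : 0 <= k <= a -> toggles_from I k = itv k a.
  move: k; apply: downward_ind => [|k _ h2 IH]; first by rewrite above //; lia.
  have hk : k < n by lia.
  by rewrite (toggles_fromS _ hk) IH toggle_grow_left.
by rewrite rowmotion_toggles_from below.
Qed.

(* Rowmotion on the empty set: every toggle, from the top down, grows the
   interval [k, n) to the left. *)
Lemma rowmotion_set0 : rowmotion set0 = itv 0 n.
Proof.
have from k : 0 <= k <= n -> toggles_from set0 k = itv k n.
  move: k; apply: downward_ind => [|k _ h2 IH].
    by rewrite toggles_from_n; apply/setP => z; rewrite !inE; lia.
  by rewrite (toggles_fromS _ h2) IH toggle_grow_left.
by rewrite rowmotion_toggles_from from.
Qed.

Definition sign (i : nat) : int := (if odd i then -1 else 1)%R.
Definition alt_sum (a b : nat) : int := (\sum_(a <= i < b) sign i)%R.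

Lemma SC_itv (a b : nat) : a <= b -> b <= n -> SC (itv a b) = alt_sum a b.
Proof.
move=> ab bn; rewrite /SC /alt_sum (@big_nat_widenl _ _ _ a 0 b) //.
rewrite (@big_nat_widen _ _ _ 0 b n) // big_mkord.
by apply: eq_big => [x|x _]; rewrite ?inE.
Qed.

End ChainIntervals.

(* Shifting by one rank flips every sign. *)
Lemma alt_sum_shift (a b : nat) : alt_sum a.+1 b.+1 = (- alt_sum a b)%R.
Proof.
by rewrite /alt_sum big_add1 -sumrN; apply: eq_bigr => i _; rewrite /sign /=; case: odd.
Qed.

Lemma alt_sum_cat (a b c : nat) : a <= b <= c -> alt_sum a c = (alt_sum a b + alt_sum b c)%R.
Proof. by move=> /andP[ab bc]; rewrite /alt_sum (big_cat_nat ab bc). Qed.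

(* Over an even-length initial segment the signs cancel in pairs. *)
Lemma alt_sum_even (m : nat) : ~~ odd m -> alt_sum 0 m = 0%R.
Proof.
move=> /negbTE em; rewrite -[m]odd_double_half em add0n.
elim: m./2 => [|k IH]; first by rewrite /alt_sum big_geq.
rewrite doubleS /alt_sum !big_nat_recr //= -/(alt_sum 0 k.*2) IH /sign /= odd_double.
by rewrite add0r addrN.
Qed.

Lemma SC_rowmotion (n : nat) (I : {set 'I_n}) :
  ~~ odd n -> interval_closed I -> SC (rowmotion I) = (- SC I)%R.
Proof.
move=> /alt_sum_even alt_n.
case/interval_closed_cases => [->|[a [b [/andP[ab bn] ->]]]].
  by rewrite rowmotion_set0 SC_itv // alt_n /SC big_set0 oppr0.
have [bltn|] := ltnP b n.
  by rewrite rowmotion_itv_shift // !SC_itv ?alt_sum_shift // ltnW.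
move=> nleb; have an : a < n := leq_trans ab bn.
have -> : b = n by apply/eqP; rewrite eqn_leq bn.
rewrite rowmotion_itv_top // !SC_itv ?(ltnW an) //.
by apply/eqP; rewrite -addr_eq0 -alt_sum_cat ?alt_n //= ltnW.
Qed.

Local Open Scope ring_scope.

Section OrbitSums.
Variables (T : finType) (f : T -> T).

Lemma map_traject (x : T) (m : nat) : map f (traject f x m) = traject f (f x) m.
Proof. by elim: m x => //= m IH x; rewrite IH. Qed.

(* A trajectory that closes up is a cycle, so applying f to it only
   rotates it. *)
Lemma perm_map_closed_traject (x : T) (m : nat) :
  iter m f x = x -> perm_eq (map f (traject f x m)) (traject f x m).
Proof.
case: m => [//|m] back; rewrite map_traject.
rewrite [traject f (f x) _]trajectSr -iterSr back trajectS -rot1_cons.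
by rewrite perm_rot.
Qed.

Lemma orbit_sum_anti (R : numDomainType) (S : {pred T}) (h : T -> R) (x : T) :
  {homo f : y / y \in S} -> {in S &, injective f} ->
  {in S, forall y, h (f y) = - h y} -> x \in S ->
  \sum_(y <- orbit f x) h y = 0.
Proof.
move=> fS finj hf xS.
have orbitS y : y \in orbit f x -> y \in S.
  by case/trajectP => i _ ->; apply: iter_in.
have shift : \sum_(y <- orbit f x) h (f y) = \sum_(y <- orbit f x) h y.
  by rewrite -(big_map f xpredT) (perm_big _ (perm_map_closed_traject _))
     ?(iter_order_in fS finj xS).
rewrite (eq_big_seq _ (fun y yo => hf y (orbitS y yo))) sumrN in shift.
have : (\sum_(y <- orbit f x) h y) *+ 2 == 0 by rewrite mulr2n -{1}shift addNr.
by rewrite mulrn_eq0 => /eqP.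
Qed.

End OrbitSums.

Theorem proposition3p16 (n : nat) (hn : ~~ odd n) : mesic (@SC n) 0%R.
Proof.
move=> I hI; rewrite /orbit_average.
have -> : \sum_(J <- orbit (@rowmotion n) I) ((SC J)%:~R : rat) = 0.
  apply: (orbit_sum_anti (S := [pred J | interval_closed J])) => //.
  - by move=> J; apply: rowmotion_interval_closed.
  - by move=> J1 J2; apply: rowmotion_inj.
  - by move=> J hJ /=; rewrite SC_rowmotion // intrN.
by rewrite mul0r.
Qed.
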